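(* Let $\bar x\in\mathbb{C}^n$ be a sparsest solution of problem (P), i.e. an optimal solution of (P). Suppose $X^*\in\mathbb{C}^{(n+1)\times(n+1)}$ satisfies all of the following: - $B(X^* )=y$, where $y=(y_1,\dots,y_N)$; - $X^*$ is Hermitian positive semidefinite; - $\operatorname{rank}(X^* )=1$; - $X^*_{1,1}=1$. Suppose further that $B$ is $(\epsilon,2\|X^*\|_0)$-RIP for some $\epsilon<1$. Then: - $X^*=\begin{bmatrix}1\\ \bar x\end{bmatrix}\begin{bmatrix}1 & \bar x^H\end{bmatrix}$; - $X^*_{2:n+1,1}=\bar x$; - $X^*$ is the unique matrix with the properties listed above, and $\bar x$ is the unique sparsest solution of (P).
   Context: Fix integers $n,N\ge 1$ and data $a_i\in\mathbb{C}$, $b_i,c_i\in\mathbb{C}^n$, $Q_i\in\mathbb{C}^{n\times n}$, $y_i\in\mathbb{C}$ for $i=1,\dots,N$. Problem (P) is $$\min_{x\in\mathbb{C}^n}\|x\|_0\quad\text{subject to}\quad y_i=a_i+b_i^H x+x^H c_i+x^H Q_i x,\quad i=1,\dots,N.$$ Here $\|\cdot\|_0$ counts the nonzero entries of a vector or matrix, and ${}^H$ denotes conjugate transpose. Let $\Phi_i=\begin{bmatrix} a_i & b_i^H\\ c_i & Q_i\end{bmatrix}\in\mathbb{C}^{(n+1)\times(n+1)}$. Define the linear operator $B:\mathbb{C}^{(n+1)\times(n+1)}\to\mathbb{C}^N$ by $B(X)=(\operatorname{tr}(\Phi_i X))_{i=1}^N$. A linear operator $B$ of this form is called $(\epsilon,k)$-RIP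 if $\left|\frac{\|B(X)\|^2}{\|X\|^2}-1\right|<\epsilon$ for every nonzero $X\in\mathbb{C}^{(n+1)\times(n+1)}$ with $\|X\|_0\le k$. In this condition $\|B(X)\|$ is the Euclidean norm in $\mathbb{C}^N$ and $\|X\|$ is the spectral norm. $X_{2:n+1,1}$ denotes the vector formed by entries $2,\dots,n+1$ of the first column of $X$.
   Formalization: X* is unique only among matrices X′ that have the four listed properties and for which B is also (ε′, 2‖X′‖₀)-RIP for some ε′ < 1. The statement above fails without it. *)

(* The field of complex numbers is modelled by an arbitrary
   numClosedFieldType R (e.g. algC). *)
From HB Require Import structures.
From mathcomp Require Import all_boot all_order all_algebra.
Set Implicit Arguments. Unset Strict Implicit. Unset Printing Implicit Defensive.
Import Order.TTheory GRing.Theory Num.Theory.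
Local Open Scope ring_scope.

Section Defs.
Variable R : numClosedFieldType.

Definition mxH m p (A : 'M[R]_(m, p)) : 'M[R]_(p, m) := (map_mx Num.conj A)^T.

Definition nnz m p (A : 'M[R]_(m, p)) : nat :=
  #|[set ij : 'I_m * 'I_p | A ij.1 ij.2 != 0]|.

Definition vnorm2 m (v : 'cV[R]_m) : R := \sum_i `|v i 0| ^+ 2.

Definition is_spectral_norm m p (X : 'M[R]_(m, p)) (s : R) : Prop :=
  0 <= s /\
  (forall v : 'cV[R]_p, vnorm2 (X *m v) <= s ^+ 2 * vnorm2 v) /\
  (exists2 v : 'cV[R]_p, v != 0 & vnorm2 (X *m v) = s ^+ 2 * vnorm2 v).

Definition Phi n (a : R) (b c : 'cV[R]_n) (Q : 'M[R]_n) : 'M[R]_(1 + n) :=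
  block_mx (a%:M : 'M_1) (mxH b) c Q.

Definition Bop n N (a : 'I_N -> R) (b c : 'I_N -> 'cV[R]_n)
  (Q : 'I_N -> 'M[R]_n) (X : 'M[R]_(1 + n)) : 'cV[R]_N :=
  \col_i \tr (Phi (a i) (b i) (c i) (Q i) *m X).

Definition RIP n N (a : 'I_N -> R) (b c : 'I_N -> 'cV[R]_n)
  (Q : 'I_N -> 'M[R]_n) (eps : R) (k : nat) : Prop :=
  forall X : 'M[R]_(1 + n), X != 0 -> (nnz X <= k)%N ->
  forall s, is_spectral_norm X s ->
    `| vnorm2 (Bop a b c Q X) / s ^+ 2 - 1 | < eps.

Definition feasibleP n N (a : 'I_N -> R) (b c : 'I_N -> 'cV[R]_n)
  (Q : 'I_N -> 'M[R]_n) (y : 'I_N -> R) (x : 'cV[R]_n) : Prop :=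
  forall i, y i = a i + (mxH (b i) *m x) 0 0 + (mxH x *m c i) 0 0
                  + (mxH x *m Q i *m x) 0 0.

Definition sparsestP n N (a : 'I_N -> R) (b c : 'I_N -> 'cV[R]_n)
  (Q : 'I_N -> 'M[R]_n) (y : 'I_N -> R) (x : 'cV[R]_n) : Prop :=
  feasibleP a b c Q y x /\
  forall x' : 'cV[R]_n, feasibleP a b c Q y x' -> (nnz x <= nnz x')%N.

Definition hermitian m (X : 'M[R]_m) : Prop := mxH X = X.
Definition psd m (X : 'M[R]_m) : Prop :=
  hermitian X /\ forall v : 'cV[R]_m, 0 <= (mxH v *m X *m v) 0 0.

Definition lifted_props n N (a : 'I_N -> R) (b c : 'I_N -> 'cV[R]_n)
  (Q : 'I_N -> 'M[R]_n) (y : 'I_N -> R) (X : 'M[R]_(1 + n)) : Prop :=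
  Bop a b c Q X = \col_i y i /\ psd X /\ \rank X = 1%N /\
  X (lshift n (0 : 'I_1)) (lshift n (0 : 'I_1)) = 1.

Definition lift1 n (x : 'cV[R]_n) : 'cV[R]_(1 + n) := col_mx (1 : 'cV_1) x.

End Defs.

(* A Hermitian rank-one matrix with top-left entry 1 is an outer product
   [1; x][1; x]^H, and B sends it to y exactly when x is feasible for (P).
   The difference D of X* and [1; xbar][1; xbar]^H is therefore Hermitian with
   B(D) = 0, and since xbar is at least as sparse as x,
   ||D||_0 <= ||X*||_0 + (1 + ||xbar||_0)^2 <= 2 ||X*||_0.
   If D were nonzero, the RIP inequality at D would read |0 - 1| < eps < 1.
   Uniqueness of X* and of xbar follows by applying this to other solutions. *)

From Pilot Require Import Defs.
From HB Require Import structures.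
From mathcomp Require Import all_boot all_order all_algebra.
From mathcomp Require Import sesquilinear spectral.
Import Order.TTheory GRing.Theory Num.Theory.
Set Implicit Arguments. Unset Strict Implicit. Unset Printing Implicit Defensive.
Local Open Scope ring_scope.
Local Open Scope sesquilinear_scope.

Section ConjugateTranspose.
Variable R : numClosedFieldType.

Lemma mxH_trmxC m p (A : 'M[R]_(m, p)) : mxH A = A ^t*.
Proof. by rewrite /mxH map_trmx. Qed.

Lemma mxH_coef m p (A : 'M[R]_(m, p)) i j : mxH A i j = (A j i)^*.
Proof. by rewrite !mxE. Qed.

Lemma mxH_mul m p q (A : 'M[R]_(m, p)) (B : 'M[R]_(p, q)) :
  mxH (A *m B) = mxH B *m mxH A.
Proof. by rewrite !mxH_trmxC trmx_mul map_mxM. Qed.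

Lemma mxHK m p (A : 'M[R]_(m, p)) : mxH (mxH A) = A.
Proof. by rewrite !mxH_trmxC trmxCK. Qed.

Lemma mxHB m p (A B : 'M[R]_(m, p)) : mxH (A - B) = mxH A - mxH B.
Proof. by apply/matrixP=> i j; rewrite !mxE rmorphB. Qed.

Lemma outer_coef m p (u : 'cV[R]_m) (v : 'cV[R]_p) i j :
  (u *m mxH v) i j = u i 0 * (v j 0)^*.
Proof. by rewrite mxE big_ord1 mxH_coef. Qed.

End ConjugateTranspose.

Section EuclideanNorm.
Variable R : numClosedFieldType.

Lemma vnorm2E m (v : 'cV[R]_m) : vnorm2 v = (mxH v *m v) 0 0.
Proof. by rewrite mxE; apply: eq_bigr => i _; rewrite mxH_coef normCK mulrC. Qed.

Lemma vnorm2_0 m : vnorm2 (0 : 'cV[R]_m) = 0.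
Proof. by rewrite vnorm2E mulmx0 mxE. Qed.

Lemma vnorm2_isometry m p (U : 'M[R]_(m, p)) (v : 'cV[R]_p) :
  mxH U *m U = 1%:M -> vnorm2 (U *m v) = vnorm2 v.
Proof.
by move=> UU; rewrite !vnorm2E mxH_mul mulmxA -(mulmxA (mxH v)) UU mulmx1.
Qed.

Lemma vnorm2_diag m (d : 'rV[R]_m) (v : 'cV[R]_m) :
  vnorm2 (diag_mx d *m v) = \sum_i `|d 0 i| ^+ 2 * `|v i 0| ^+ 2.
Proof. by apply: eq_bigr => i _; rewrite mul_diag_mx mxE normrM exprMn. Qed.

End EuclideanNorm.

Section SpectralNorm.
Variable R : numClosedFieldType.

Lemma exists_argmax_nneg m (f : 'I_m -> R) :
  (0 < m)%N -> (forall i, 0 <= f i) -> exists k, forall i, f i <= f k.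
Proof.
elim: m f => // [[_ f _ _ | m IH f _ f_ge0]].
  by exists ord0 => i; rewrite ord1.
have [k fk_max] := IH (f \o lift ord0) isT (fun i => f_ge0 _).
have [f0_le | fk_le] := orP (ger_leVge (f_ge0 ord0) (f_ge0 (lift ord0 k))).
- exists (lift ord0 k) => i; case: (unliftP ord0 i) => [j ->|->] //.
  exact: fk_max.
- exists ord0 => i; case: (unliftP ord0 i) => [j ->|->] //.
  exact: le_trans (fk_max j) fk_le.
Qed.

Lemma is_spectral_norm_diag m (d : 'rV[R]_m) (k : 'I_m) :
  (forall i, `|d 0 i| <= `|d 0 k|) -> is_spectral_norm (diag_mx d) `|d 0 k|.
Proof.
move=> dk_max; split; [exact: normr_ge0 | split].
  move=> v; rewrite vnorm2_diag /vnorm2 big_distrr /=; apply: ler_sum => i _.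
  by rewrite ler_wpM2r ?exprn_ge0 // lerXn2r ?nnegrE.
have delta_coef (i : 'I_m) : `|(delta_mx k 0 : 'cV[R]_m) i 0| ^+ 2 = (i == k)%:R.
  by rewrite mxE eqxx andbT; case: (i == k); rewrite ?normr1 ?normr0 ?expr1n ?expr0n.
exists (delta_mx k 0).
  by apply/eqP => /matrixP /(_ k 0) /eqP; rewrite !mxE !eqxx oner_eq0.
rewrite vnorm2_diag /vnorm2 (bigD1 k) //= [in RHS](bigD1 k) //= !big1 => [|i|i].
- by rewrite !delta_coef eqxx !addr0 mulr1.
- by move=> /negbTE ik; rewrite delta_coef ik.
- by move=> /negbTE ik; rewrite delta_coef ik mulr0.
Qed.

Lemma is_spectral_norm_unitary_conj m (P A : 'M[R]_m) (s : R) :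
  P \is unitarymx -> is_spectral_norm A s -> is_spectral_norm (P ^t* *m A *m P) s.
Proof.
move=> /unitarymxP PPt [s_ge0 [A_le [v v_neq0 A_eq]]].
have PtP : mxH P *m P = 1%:M by rewrite mxH_trmxC; apply: mulmx1C.
have Pt_isometry : mxH (P ^t*) *m P ^t* = 1%:M by rewrite mxH_trmxC trmxCK.
have PAP_norm w : vnorm2 (P ^t* *m A *m P *m w) = vnorm2 (A *m (P *m w)).
  by rewrite -!mulmxA vnorm2_isometry.
split; [done | split].
  by move=> w; rewrite PAP_norm -(vnorm2_isometry w PtP); apply: A_le.
exists (P ^t* *m v).
  move: v_neq0; apply: contraNneq => /(congr1 (mulmx P)).
  by rewrite mulmxA PPt mul1mx mulmx0 => ->.
by rewrite PAP_norm (mulmxA P) PPt mul1mx (vnorm2_isometry _ Pt_isometry).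
Qed.

Lemma normalmx_spectral_norm m (A : 'M[R]_m) :
  (0 < m)%N -> A \is normalmx -> exists s, is_spectral_norm A s.
Proof.
move=> m_gt0 /orthomx_spectralP; set P := spectralmx A; set d := spectral_diag A.
have P_unitary : P \is unitarymx := spectral_unitarymx A.
rewrite invmx_unitary // => ->.
have [k dk_max] := exists_argmax_nneg m_gt0 (fun i => normr_ge0 (d 0 i)).
by exists `|d 0 k|; apply/is_spectral_norm_unitary_conj/is_spectral_norm_diag.
Qed.

End SpectralNorm.

Section Sparsity.
Variable R : numClosedFieldType.

Lemma nnzE m p (A : 'M[R]_(m, p)) : nnz A = (\sum_i \sum_j (A i j != 0%R : nat))%N.
Proof.
rewrite /nnz -sum1_card big_mkcond /= pair_big /=.
by apply: eq_bigr => i _; rewrite inE; case: (_ != 0).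
Qed.

Lemma nnzB m p (A B : 'M[R]_(m, p)) : (nnz (A - B) <= nnz A + nnz B)%N.
Proof.
apply: leq_trans (leq_card_setU _ _).1; apply/subset_leq_card/subsetP => ij.
rewrite !inE !mxE; apply: contraR; rewrite negb_or !negbK.
by move=> /andP[/eqP-> /eqP->]; rewrite subrr.
Qed.

Lemma nnz_outer m p (u : 'cV[R]_m) (v : 'cV[R]_p) :
  nnz (u *m mxH v) = (nnz u * nnz v)%N.
Proof.
rewrite !nnzE big_distrl /=; apply: eq_bigr => i _; rewrite big_ord1 big_distrr /=.
apply: eq_bigr => j _; rewrite big_ord1 outer_coef mulf_eq0 conjC_eq0 negb_or.
by case: (u i 0 != 0); case: (v j 0 != 0).
Qed.

Lemma nnz_lift1 n (x : 'cV[R]_n) : nnz (lift1 x) = (1 + nnz x)%N.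
Proof.
rewrite !nnzE big_split_ord big_ord1 /= /lift1; congr addn.
  by rewrite big_ord1 col_mxEu mxE oner_neq0.
by apply: eq_bigr => i _; rewrite !big_ord1 col_mxEd.
Qed.

End Sparsity.

Section Lifting.
Variables (R : numClosedFieldType) (n N : nat).
Variables (a : 'I_N -> R) (b c : 'I_N -> 'cV[R]_n) (Q : 'I_N -> 'M[R]_n).
Local Notation e0 := (lshift n (0 : 'I_1)).
Local Notation B := (Bop a b c Q).

Lemma quad_lift1 (a0 : R) (b0 c0 x : 'cV[R]_n) (Q0 : 'M[R]_n) :
  (mxH (lift1 x) *m Phi a0 b0 c0 Q0 *m lift1 x) 0 0 =
  a0 + (mxH b0 *m x) 0 0 + (mxH x *m c0) 0 0 + (mxH x *m Q0 *m x) 0 0.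
Proof.
have -> : mxH (lift1 x) = row_mx 1 (mxH x).
  rewrite /lift1 /mxH map_col_mx tr_col_mx; congr row_mx.
  by apply/matrixP=> i j; rewrite !ord1 !mxE eqxx conjC1.
rewrite /Phi /lift1 mul_row_block mul_row_col !mul1mx !mulmx1 mulmxDl !mxE.
by rewrite eqxx mulr1n !addrA (addrAC a0).
Qed.

Lemma Bop_outer (w : 'cV[R]_(1 + n)) i :
  B (w *m mxH w) i 0 = (mxH w *m Phi (a i) (b i) (c i) (Q i) *m w) 0 0.
Proof. by rewrite mxE mulmxA mxtrace_mulC mulmxA /mxtrace big_ord1. Qed.

Lemma BopB (X Y : 'M[R]_(1 + n)) : B (X - Y) = B X - B Y.
Proof. by apply/matrixP=> i j; rewrite !mxE mulmxBr linearB. Qed.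

Lemma feasibleP_Bop_outer (y : 'I_N -> R) (x : 'cV[R]_n) :
  feasibleP a b c Q y x <-> B (lift1 x *m mxH (lift1 x)) = \col_i y i.
Proof.
split=> [x_feas | /matrixP B_eq i].
  by apply/matrixP=> i j; rewrite ord1 Bop_outer quad_lift1 mxE x_feas.
by have := B_eq i 0; rewrite Bop_outer quad_lift1 mxE => ->.
Qed.

Lemma lift1_top (x : 'cV[R]_n) : lift1 x e0 0 = 1.
Proof. by rewrite /lift1 col_mxEu mxE. Qed.

Lemma col_lift1_outer (x : 'cV[R]_n) : col e0 (lift1 x *m mxH (lift1 x)) = lift1 x.
Proof. by apply/matrixP=> i j; rewrite !ord1 mxE outer_coef lift1_top conjC1 mulr1. Qed.

(* All rows of X are multiples of row e0, whose entries are the conjugates of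
   column e0 because X is Hermitian. *)
Lemma hermitian_rank1_outer (X : 'M[R]_(1 + n)) :
  Defs.hermitian X -> \rank X = 1%N -> X e0 e0 = 1 ->
  exists x : 'cV[R]_n, X = lift1 x *m mxH (lift1 x).
Proof.
move=> X_herm X_rank1 X00; exists (dsubmx (col e0 X)).
have row0_neq0 : row e0 X != 0.
  by apply/eqP => /matrixP /(_ 0 e0) /eqP; rewrite !mxE X00 oner_eq0.
have X_sub_row0 : (X <= row e0 X)%MS.
  have [_ <-] := mxrank_leqif_sup (row_sub e0 X).
  by rewrite X_rank1 rank_rV row0_neq0.
have -> : lift1 (dsubmx (col e0 X)) = col e0 X.
  rewrite /lift1 -[RHS]vsubmxK; congr col_mx.
  by apply/matrixP => i j; rewrite !ord1 !mxE X00.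
apply/matrixP => i j; rewrite outer_coef !mxE.
have /sub_rVP [k /matrixP rowiE] := submx_trans (row_sub i X) X_sub_row0.
have := rowiE 0 j; have := rowiE 0 e0; have /matrixP Xe0j := X_herm.
rewrite !mxE X00 mulr1 => -> ->.
by rewrite -Xe0j mxH_coef.
Qed.

Lemma RIP_hermitian_kernel (eps : R) (k : nat) (D : 'M[R]_(1 + n)) :
  RIP a b c Q eps k -> eps <= 1 -> Defs.hermitian D -> (nnz D <= k)%N ->
  B D = 0 -> D = 0.
Proof.
move=> rip eps_le1 D_herm D_sparse BD0; apply/eqP; apply: contraT => D_neq0.
have D_normal : D \is normalmx by apply/normalmxP; rewrite -mxH_trmxC D_herm.
have [s s_norm] := normalmx_spectral_norm (ltn0Sn n) D_normal.
have := rip D D_neq0 D_sparse s s_norm.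
rewrite BD0 vnorm2_0 mul0r sub0r normrN normr1 => lt1eps.
by have := lt_le_trans lt1eps eps_le1; rewrite ltxx.
Qed.

Lemma lifted_sparsest_outer (y : 'I_N -> R) (xbar : 'cV[R]_n)
    (X : 'M[R]_(1 + n)) (eps : R) :
  sparsestP a b c Q y xbar -> lifted_props a b c Q y X -> eps <= 1 ->
  RIP a b c Q eps (2 * nnz X) -> X = lift1 xbar *m mxH (lift1 xbar).
Proof.
move=> [xbar_feas xbar_min] [BX [[X_herm _] [X_rank1 X00]]] eps_le1 rip.
have [x X_outer] := hermitian_rank1_outer X_herm X_rank1 X00.
have x_feas : feasibleP a b c Q y x by apply/feasibleP_Bop_outer; rewrite -X_outer.
set Xbar := lift1 xbar *m mxH (lift1 xbar).
have BXbar : B Xbar = \col_i y i by apply/feasibleP_Bop_outer.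
have Xbar_sparse : (nnz Xbar <= nnz X)%N.
  by rewrite X_outer !nnz_outer !nnz_lift1 leq_mul // leq_add2l (xbar_min x x_feas).
apply/eqP; rewrite -subr_eq0; apply/eqP.
apply: (RIP_hermitian_kernel rip eps_le1).
- by rewrite /Defs.hermitian mxHB X_herm /Xbar mxH_mul mxHK.
- by apply: leq_trans (nnzB _ _) _; rewrite mul2n -addnn leq_add2l.
- by rewrite BopB BX BXbar subrr.
Qed.

End Lifting.

Theorem theorem1 (R : numClosedFieldType) (n N : nat)
  (a : 'I_N -> R) (b c : 'I_N -> 'cV[R]_n) (Q : 'I_N -> 'M[R]_n)
  (y : 'I_N -> R) (xbar : 'cV[R]_n) (Xs : 'M[R]_(1 + n)) (eps : R) :
  (0 < n)%N -> (0 < N)%N ->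
  sparsestP a b c Q y xbar ->
  lifted_props a b c Q y Xs ->
  eps < 1 ->
  RIP a b c Q eps (2 * nnz Xs) ->
  [/\ Xs = lift1 xbar *m mxH (lift1 xbar),
      dsubmx (col (lshift n (0 : 'I_1)) Xs) = xbar,
      (forall X' : 'M[R]_(1 + n), lifted_props a b c Q y X' ->
         (exists2 eps' : R, eps' < 1 & RIP a b c Q eps' (2 * nnz X')) ->
         X' = Xs)
    & (forall x' : 'cV[R]_n, sparsestP a b c Q y x' -> x' = xbar)].
Proof.
move=> _ _ xbar_sparsest Xs_props /ltW eps_le1 rip.
have Xs_outer := lifted_sparsest_outer xbar_sparsest Xs_props eps_le1 rip.
have col_Xs : dsubmx (col (lshift n (0 : 'I_1)) Xs) = xbar.
  by rewrite Xs_outer col_lift1_outer /lift1 col_mxKd.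
split=> // [X' X'_props [eps' /ltW eps'_le1 rip'] | x' x'_sparsest].
  by rewrite Xs_outer (lifted_sparsest_outer xbar_sparsest X'_props eps'_le1 rip').
rewrite -col_Xs (lifted_sparsest_outer x'_sparsest Xs_props eps_le1 rip).
by rewrite col_lift1_outer /lift1 col_mxKd.
Qed.
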